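(* For $k\ge 1$ let $G_k=(V_k,E_k)$ be the graph with vertex set $V_k=\{v_0,\ldots,v_{4k}\}$ (so $|V_k|=4k+1$), specified vertex $a=v_0$, and edge set $E_k=\{(v_0,v_1),(v_0,v_2)\}\cup\bigcup_{i=0}^{k-1}\{(v_{4i+1},v_{4i+2}),(v_{4i+2},v_{4i+3}),(v_{4i+3},v_{4i+4}),(v_{4i+4},v_{4i+1})\}\cup\bigcup_{i=0}^{k-2}\{(v_{4i+4},v_{4i+5}),(v_{4i+3},v_{4i+6})\}$. Let $T_k^A$ be the spanning tree of $G_k$ with edge set $\{e_0,\ldots,e_{4k-1}\}$ where $e_i=(v_i,v_{i+1})$, and let $T_k^B$ be the spanning tree with edge set $\{(v_0,v_1),(v_0,v_2)\}\cup\bigcup_{i=0}^{k-1}\{(v_{4i+1},v_{4i+4}),(v_{4i+2},v_{4i+3})\}\cup\bigcup_{i=0}^{k-2}\{(v_{4i+4},v_{4i+5}),(v_{4i+3},v_{4i+6})\}$. Let $T_1,\ldots,T_\ell$ be a shortest sequence of spanning trees of $G_k$ with $T_1=T_k^A$ and $T_\ell=T_k^B$ such that every pair of consecutive trees are adjacent (with respect to $a=v_0$). Then $\ell=\Omega(|V_k|^2)$, i.e., there is an absolute constant $c>0$ such that $\ell\ge c\,(4k+1)^2$ for all $k\ge1$.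
   Context: Given a connected graph $G=(V,E)$ with $n\ge 2$ vertices and a specified vertex $a\in V$, two spanning trees of $G$ are called adjacent if their intersection (the subgraph consisting of the edges common to both) contains a tree on $n-1$ vertices that includes $a$. *)

From mathcomp Require Import all_boot all_order all_algebra.
Set Implicit Arguments. Unset Strict Implicit. Unset Printing Implicit Defensive.

(* Generic notions for a finite simple graph on a finType V.  An (undirected)
   edge is a 2-element set of vertices; a graph / subgraph is given by its
   edge set  E : {set {set V}}. *)
Section Graphs.
Variable V : finType.

Definition is_edge (e : {set V}) : bool := #|e| == 2.

Definition edge_rel (F : {set {set V}}) : rel V :=
  fun x y => (x != y) && ([set x; y] \in F).

Definition is_tree_on (W : {set V}) (F : {set {set V}}) : bool :=
  [&& W != set0,
      [forall e in F, is_edge e && (e \subset W)],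
      [forall x in W, forall y in W, connect (edge_rel F) x y] &
      #|F| == #|W| - 1].

Definition spanning_tree (E T : {set {set V}}) : bool :=
  (T \subset E) && is_tree_on [set: V] T.

Definition adjacent_trees (a : V) (T T' : {set {set V}}) : Prop :=
  exists (W : {set V}) (F : {set {set V}}),
    [/\ #|W| = #|V| - 1, a \in W, F \subset T :&: T' & is_tree_on W F].
End Graphs.

Definition vtx (k : nat) := 'I_(4 * k).+1.

Definition upair (x y : nat) (p : nat * nat) : bool :=
  ((x == p.1) && (y == p.2)) || ((x == p.2) && (y == p.1)).

Definition root_pairs : seq (nat * nat) := [:: (0, 1); (0, 2)].
Definition cycle_pairs (k : nat) : seq (nat * nat) :=
  flatten [seq [:: (4*i+1, 4*i+2); (4*i+2, 4*i+3); (4*i+3, 4*i+4); (4*i+4, 4*i+1)]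
          | i <- iota 0 k].
Definition link_pairs (k : nat) : seq (nat * nat) :=
  flatten [seq [:: (4*i+4, 4*i+5); (4*i+3, 4*i+6)] | i <- iota 0 (k - 1)].
Definition TA_pairs (k : nat) : seq (nat * nat) :=
  [seq (i, i.+1) | i <- iota 0 (4 * k)].
Definition TB_pairs (k : nat) : seq (nat * nat) :=
  root_pairs ++
  flatten [seq [:: (4*i+1, 4*i+4); (4*i+2, 4*i+3)] | i <- iota 0 k] ++
  link_pairs k.

Definition edges_of (k : nat) (ps : seq (nat * nat)) : {set {set vtx k}} :=
  [set e : {set vtx k} | [exists x : vtx k, exists y : vtx k, (e == [set x; y]) && has (upair (val x) (val y)) ps]].

Definition E_G (k : nat) : {set {set vtx k}} :=
  edges_of k (root_pairs ++ cycle_pairs k ++ link_pairs k).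
Definition T_A (k : nat) : {set {set vtx k}} := edges_of k (TA_pairs k).
Definition T_B (k : nat) : {set {set vtx k}} := edges_of k (TB_pairs k).
Definition a0 (k : nat) : vtx k := ord0.

From mathcomp Require Import all_boot all_order all_algebra zify lra.
Import GRing.Theory Num.Theory.
Set Implicit Arguments. Unset Strict Implicit. Unset Printing Implicit Defensive.

(* Away from v_0, G_k is a ladder, and a spanning tree crosses each of the 2k
   gaps between consecutive rungs by one or both of the rail edges there.
   Call a change of side between consecutive one-sided gaps a turn, and weight
   it by the number of gaps after it.  T^A crosses every gap on one side,
   alternating sides, so its potential is k(2k-1); T^B crosses every gap on
   both sides, so its potential is 0.  Two adjacent trees agree away from a
   single vertex x, a leaf of both; moving x only changes the rail edges at x
   in the two gaps around its rung, which shifts a turn by at most one gap but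
   cannot create or destroy one.  So each step lowers the potential by at
   most one, and l - 1 >= k(2k-1). *)

Lemma path_crossing (T : Type) (e : rel T) (P : pred T) x p :
  path e x p -> P x -> ~~ P (last x p) -> exists u v, [/\ e u v, P u & ~~ P v].
Proof.
elim: p x => [|y p IH] x /=; first by move=> _ ->.
case/andP=> exy hp Px; case Py: (P y); first exact: IH.
by move=> _; exists x, y; rewrite Py.
Qed.

Section SpanningTrees.
Variable V : finType.
Implicit Types (T F : {set {set V}}) (g : {set V}) (x a : V).

Definition deg_le1 T x : Prop :=
  forall g1 g2, g1 \in T -> g2 \in T -> x \in g1 -> x \in g2 -> g1 = g2.

Lemma tree_connect T x y : is_tree_on [set: V] T -> connect (edge_rel T) x y.
Proof.
by case/and4P=> _ _ /forall_inP/(_ x (in_setT x))/forall_inP/(_ y (in_setT y)).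
Qed.

(* Having #|V| - 2 edges, F misses exactly one edge of T, and that edge must
   contain x since T joins x to a. *)
Lemma tree_leaf T F x a :
  is_tree_on [set: V] T -> F \subset T -> #|F| = #|V| - 2 -> x != a ->
  (forall g, g \in F -> x \notin g) ->
  (forall g, g \in T -> x \notin g -> g \in F) /\ deg_le1 T x.
Proof.
move=> treeT FT cardF xa Fx.
have [y xy Txy] : exists2 y, x != y & [set x; y] \in T.
  case/connectP: (tree_connect x a treeT) => [[|y p]] /= => [_ ax | /andP [/andP [xy Txy] _] _].
    by rewrite ax eqxx in xa.
  by exists y.
have xV : 1 < #|V|.
  by rewrite -cardsT (cardsD1 x) (cardsD1 a) !inE eq_sym xa.
have [e TFe] : exists e, T :\: F = [set e].
  apply/cards1P; rewrite cardsD (setIidPr FT) cardF.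
  by case/and4P: treeT => _ _ _ /eqP ->; rewrite cardsT; apply/eqP; lia.
have edgeD g : g \in T -> g \notin F -> g = [set x; y].
  move=> Tg Fg; have : g \in [set e] by rewrite -TFe inE Fg Tg.
  rewrite inE => /eqP ->.
  have : [set x; y] \in [set e] by rewrite -TFe inE Txy andbT; apply/negP=> /Fx; rewrite set21.
  by rewrite inE => /eqP.
split=> [g Tg xg | g1 g2 Tg1 Tg2 xg1 xg2].
  by apply: contraNT xg => /(edgeD g Tg) ->; rewrite set21.
have notF (g : {set V}) : x \in g -> g \notin F.
  by move=> xg; apply/negP=> /Fx; rewrite xg.
by rewrite (edgeD g1 Tg1 (notF _ xg1)) (edgeD g2 Tg2 (notF _ xg2)).
Qed.

Lemma adjacent_trees_leaf T T' a :
  is_tree_on [set: V] T -> is_tree_on [set: V] T' -> adjacent_trees a T T' ->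
  exists2 x, x != a &
  [/\ forall g, x \notin g -> (g \in T) = (g \in T'), deg_le1 T x & deg_le1 T' x].
Proof.
move=> treeT treeT' [W [F [cardW aW]]]; rewrite subsetI => /andP [FT FT'].
case/and4P=> _ /forall_inP FW _ /eqP cardF.
have [x xW] : exists x, x \notin W.
  apply/existsP; rewrite -negb_forall; apply: contraTN aW => /forallP Wall.
  have V0 : 0 < #|V| by apply/card_gt0P; exists a.
  suff: #|V| <= #|W| by rewrite cardW; lia.
  by rewrite -cardsT subset_leq_card //; apply/subsetP=> z _; apply: Wall.
have xa : x != a by apply: contraNneq xW => ->.
have Fx g : g \in F -> x \notin g.
  by move=> /FW /andP [_ /subsetP gW]; apply: contra xW; apply: gW.
have cardF' : #|F| = #|V| - 2 by rewrite cardF cardW -subnDA.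
have [TF leafT] := tree_leaf treeT FT cardF' xa Fx.
have [T'F leafT'] := tree_leaf treeT' FT' cardF' xa Fx.
exists x => //; split=> // g xg.
by apply/idP/idP=> [/TF | /T'F] /(_ xg) => [/(subsetP FT')|/(subsetP FT)].
Qed.
End SpanningTrees.

(* Away from v_0, G_k is a ladder with rungs {v_(2l-1), v_(2l)} at levels
   l = 1..2k; the two rails are the sides, side true holding the v_i with
   i = 2, 3 mod 4.  Level 0 is v_0 alone, joined to both vertices of level 1. *)
Definition level (v : nat) : nat := v.+1 %/ 2.
Definition side (v : nat) : bool := (v %% 4 == 2) || (v %% 4 == 3).
Definition ladder_vertex (l : nat) (b : bool) : nat :=
  if l == 0 then 0 else
  if b == odd l then 2 * l else 2 * l - 1.

Lemma level_ladder_vertex l b : level (ladder_vertex l b) = l.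
Proof.
rewrite /level /ladder_vertex; case: (l =P 0) => [-> //|l0].
by case: (b == odd l); lia.
Qed.

Lemma side_ladder_vertex l b : 0 < l -> side (ladder_vertex l b) = b.
Proof.
move=> l0; rewrite /ladder_vertex /side; case: (l =P 0) => [e|_]; first lia.
have lmod : odd l = (l %% 2 == 1) by rewrite modn2; case: odd.
rewrite lmod; case: b; case: (l %% 2 =P 1) => h /=;
  by [apply/orP; (left + right); apply/eqP; lia | apply/negbTE/negP => /orP [] /eqP; lia].
Qed.

Lemma ladder_vertex_level_side v : ladder_vertex (level v) (side v) = v.
Proof.
rewrite /ladder_vertex /level /side; case: (v.+1 %/ 2 =P 0) => [e|_]; first lia.
have lmod : odd (v.+1 %/ 2) = (v.+1 %/ 2 %% 2 == 1) by rewrite modn2; case: odd.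
rewrite lmod; have : v %% 4 < 4 by rewrite ltn_mod.
by case: (v %% 4 =P 2) => h2; case: (v %% 4 =P 3) => h3 /=; case: eqP => h; lia.
Qed.

Lemma ladder_vertex_le l b : ladder_vertex l b <= 2 * l.
Proof. by rewrite /ladder_vertex; case: (l == 0) => //; case: (b == odd l); lia. Qed.

Definition ladder_step (x y : nat) : bool :=
  ((level x == level y) && (0 < level x)) ||
  ((level y == (level x).+1) && ((x == 0) || (side x == side y))).
Definition ladder_adj (x y : nat) : bool := ladder_step x y || ladder_step y x.

Lemma ladder_adjC x y : ladder_adj x y = ladder_adj y x.
Proof. by rewrite /ladder_adj orbC. Qed.

Lemma ladder_adj_rung x y : level x = level y -> 0 < level x -> ladder_adj x y.
Proof. by move=> e l0; rewrite /ladder_adj /ladder_step e eqxx -e l0. Qed.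

Lemma ladder_adj_rail x y : level y = (level x).+1 -> side x = side y -> ladder_adj x y.
Proof. by move=> e s; rewrite /ladder_adj /ladder_step e s !eqxx !orbT. Qed.

Lemma side_add4 i c : side (4 * i + c) = side c.
Proof. by rewrite /side; have -> : (4 * i + c) %% 4 = c %% 4 by lia. Qed.

Lemma E_G_pairs_ladder k x y :
  has (upair x y) (root_pairs ++ cycle_pairs k ++ link_pairs k) -> ladder_adj x y.
Proof.
case/hasP => [[u v] uv_in] xy_uv.
suff: ladder_adj u v.
  by case/orP: xy_uv => /andP [/eqP -> /eqP ->]; rewrite // ladder_adjC.
rewrite !mem_cat in uv_in; case/or3P: uv_in.
- by rewrite !inE => /orP [] /eqP [-> ->].
- case/flattenP => s /mapP [i _ ->]; rewrite !inE => /or4P [] /eqP [-> ->].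
  + by apply: ladder_adj_rung; rewrite /level; lia.
  + by apply: ladder_adj_rail; [rewrite /level; lia | rewrite !side_add4].
  + by apply: ladder_adj_rung; rewrite /level; lia.
  + by rewrite ladder_adjC; apply: ladder_adj_rail; [rewrite /level; lia | rewrite !side_add4].
- case/flattenP => s /mapP [i _ ->]; rewrite !inE => /orP [] /eqP [-> ->].
  + by apply: ladder_adj_rail; [rewrite /level; lia | rewrite !side_add4].
  + apply: ladder_adj_rail; first by rewrite /level; lia.
    by rewrite (_ : 4 * i + 6 = 4 * i.+1 + 2) ?side_add4 //; lia.
Qed.

(* A gap state records which of the two rail edges (side false, side true) of
   a gap a tree uses; [p] is the side of the last one-sided gap, if any. *)
Definition rail_state (b : bool) (s : bool * bool) : bool := if b then s.2 else s.1.
Definition one_sided (s : bool * bool) : bool := s.1 != s.2.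
Definition turn (p : option bool) (s : bool * bool) : bool :=
  one_sided s && (p != Some s.2).
Definition last_side (p : option bool) (s : bool * bool) : option bool :=
  if one_sided s then Some s.2 else p.

Fixpoint potential (p : option bool) (l : seq (bool * bool)) (m : nat) : nat :=
  if l is s :: l' then (size l' + m) * turn p s + potential (last_side p s) l' m
  else 0.

Lemma potential_cat p l1 l2 m :
  potential p (l1 ++ l2) m =
  potential p l1 (size l2 + m) + potential (foldl last_side p l1) l2 m.
Proof. by elim: l1 p => [|s l1 IH] p //=; rewrite IH size_cat !addnA. Qed.

Lemma potential_two_sided p l m : all (pred1 (true, true)) l -> potential p l m = 0.
Proof.
elim: l p => [|s l IH] p //= /andP [/eqP -> two_l].
by rewrite IH // /turn /one_sided muln0.
Qed.

Definition alternating (j : nat) : bool * bool := (~~ odd j, odd j).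

Lemma potential_alternating n : forall i p, p != Some (odd i) ->
  (potential p [seq alternating j | j <- iota i n] 0).*2 = n * n.-1.
Proof.
elim: n => [|n IH] i p pi //=.
have -> : turn p (alternating i) by rewrite /turn /one_sided /= pi; case: odd.
have -> : last_side p (alternating i) = Some (odd i).
  by rewrite /last_side /one_sided /=; case: odd.
rewrite size_map size_iota addn0 muln1 doubleD IH; last by rewrite /=; case: odd.
by case: n {IH} => [|n] //=; lia.
Qed.

(* A leaf on side b of the ladder lies on the side-b rail edges of two
   consecutive gaps; moving it changes only those two edges, and keeps at most
   one of them. *)
Definition leaf_move (b : bool) (s1 s2 t1 t2 : bool * bool) : bool :=
  [&& rail_state (~~ b) s1 == rail_state (~~ b) t1,
      rail_state (~~ b) s2 == rail_state (~~ b) t2,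
      all (fun s : bool * bool => s.1 || s.2) [:: s1; s2; t1; t2],
      ~~ (rail_state b s1 && rail_state b s2) &
      ~~ (rail_state b t1 && rail_state b t2)].

Lemma leaf_move_turns p b s1 s2 t1 t2 : leaf_move b s1 s2 t1 t2 ->
  last_side (last_side p s1) s2 = last_side (last_side p t1) t2 /\
  turn p s1 + turn (last_side p s1) s2 = turn p t1 + turn (last_side p t1) t2.
Proof.
by case: p => [[]|]; case: b; case: s1 => [[] []]; case: s2 => [[] []];
  case: t1 => [[] []]; case: t2 => [[] []].
Qed.

Lemma potential_leaf_move p n i b (f g : nat -> bool * bool) :
  i < n -> (forall j, j < n -> j != i -> j != i.+1 -> f j = g j) ->
  (i.+1 < n -> leaf_move b (f i) (f i.+1) (g i) (g i.+1)) ->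
  potential p [seq f j | j <- iota 0 n] 0 <= potential p [seq g j | j <- iota 0 n] 0 + 1.
Proof.
move=> lt_i_n fg move_fg.
have -> : iota 0 n = iota 0 i ++ i :: iota i.+1 (n - i.+1).
  by rewrite {1}(_ : n = i + (n - i.+1).+1) ?iotaD //; lia.
have fg_out j : j \in iota 0 i ++ iota i.+2 (n - i.+2) -> f j = g j.
  by rewrite mem_cat !mem_iota => j_out; apply: fg; lia.
rewrite !map_cat.
have -> : [seq f j | j <- iota 0 i] = [seq g j | j <- iota 0 i].
  by apply/eq_in_map => j j_in; apply: fg_out; rewrite mem_cat j_in.
rewrite !potential_cat !size_map /= !size_map -addnA leq_add2l.
set q := foldl _ _ _.
case: (ltnP i.+1 n) => [lt_Si_n|]; last first.
  by move=> le_n_Si; rewrite (_ : n - i.+1 = 0) /=; lia.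
have [last_eq turns_eq] := leaf_move_turns q (move_fg lt_Si_n).
rewrite (_ : n - i.+1 = (n - i.+2).+1) /=; last by lia.
have -> : [seq f j | j <- iota i.+2 (n - i.+2)] = [seq g j | j <- iota i.+2 (n - i.+2)].
  by apply/eq_in_map => j j_in; apply: fg_out; rewrite mem_cat j_in orbT.
rewrite !size_map size_iota last_eq; move: turns_eq.
by case: (turn q (f i)); case: (turn q (g i)); case: turn; case: turn => /=; lia.
Qed.

Lemma upairC x y p : upair x y p = upair y x p.
Proof. by rewrite /upair orbC; congr (_ || _); apply: andbC. Qed.

Lemma mem_edges_of k ps (x y : vtx k) :
  ([set x; y] \in edges_of k ps) = has (upair x y) ps.
Proof.
rewrite inE; apply/existsP/idP => [[x' /existsP [y' /andP [/eqP xy_eq xy'_in]]]|].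
  have /set2P x'_xy : x' \in [set x; y] by rewrite xy_eq set21.
  have /set2P y'_xy : y' \in [set x; y] by rewrite xy_eq set22.
  have /set2P x_xy' : x \in [set x'; y'] by rewrite -xy_eq set21.
  have /set2P y_xy' : y \in [set x'; y'] by rewrite -xy_eq set22.
  move: x'_xy y'_xy x_xy' y_xy' xy'_in => [] -> [] ->.
  - by move=> _ [] ->.
  - by [].
  - by rewrite (eq_has (upairC _ _)).
  - by move=> [] ->.
by move=> xy_in; exists x; apply/existsP; exists y; rewrite eqxx.
Qed.

Lemma has_TA_pairs k x y : has (upair x y) (TA_pairs k) =
  ((x.+1 == y) && (y <= 4 * k)) || ((y.+1 == x) && (x <= 4 * k)).
Proof.
rewrite has_map; apply/hasP/orP.
- case=> i; rewrite mem_iota /upair /= => lt_i /orP [] /andP [/eqP -> /eqP ->];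
    [left | right]; rewrite eqxx /=; lia.
- case=> /andP [/eqP <- le_y]; [exists x | exists y];
    rewrite ?mem_iota /upair /= ?eqxx ?orbT //; lia.
Qed.

Definition rail_end k (l : nat) (b : bool) : vtx k := inord (ladder_vertex l b).
Definition rail k (j : nat) (b : bool) : {set vtx k} := [set rail_end k j b; rail_end k j.+1 b].

Lemma val_rail_end k l b : l <= 2 * k -> (rail_end k l b : nat) = ladder_vertex l b.
Proof. by move=> le_l; rewrite /rail_end inordK //; have := ladder_vertex_le l b; lia. Qed.

Lemma level_rail_end k l b : l <= 2 * k -> level (rail_end k l b) = l.
Proof. by move=> le_l; rewrite val_rail_end // level_ladder_vertex. Qed.

Lemma level_vtx_le k (x : vtx k) : level x <= 2 * k.
Proof. by have := ltn_ord x; rewrite /level; lia. Qed.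

Lemma rail_end_level_side k (x : vtx k) : rail_end k (level x) (side x) = x.
Proof. by apply: val_inj; rewrite /= val_rail_end ?level_vtx_le ?ladder_vertex_level_side. Qed.

Lemma mem_rail k (x : vtx k) i j b : j < 2 * k -> level x = i.+1 ->
  x \in rail k j b -> ((j == i) || (j == i.+1)) && (b == side x).
Proof.
move=> lt_j lx; rewrite !inE => /orP [] /eqP x_eq; move: lx; rewrite x_eq.
  rewrite level_rail_end ?(ltnW lt_j) // => j_eq; subst j.
  by rewrite val_rail_end ?(ltnW lt_j) ?side_ladder_vertex ?eqxx ?orbT.
rewrite level_rail_end // => -[j_eq]; subst j.
by rewrite val_rail_end ?side_ladder_vertex ?eqxx.
Qed.

Lemma rail_T_A k j b : j < 2 * k -> (rail k j b \in T_A k) = (b == odd j).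
Proof.
move=> lt_j; rewrite mem_edges_of has_TA_pairs !val_rail_end ?(ltnW lt_j) //.
rewrite /ladder_vertex /=; case: (j =P 0) => [j0 | j0]; first by subst j; case: b => /=; lia.
by case: b; case: (boolP (odd j)) => /= odd_j; lia.
Qed.

Lemma TB_pairs_rail k j b : j < 2 * k ->
  (ladder_vertex j b, ladder_vertex j.+1 b) \in TB_pairs k.
Proof.
move=> lt_j; rewrite /TB_pairs !mem_cat /ladder_vertex /=.
case: (j =P 0) => [-> | j0]; first by case: b.
have j_mod : j %% 2 = odd j by rewrite modn2.
case: (boolP (odd j)) => odd_j /= in j_mod *; apply/orP; right; apply/orP.
- left; apply/flattenP; exists [:: (4 * (j %/ 2) + 1, 4 * (j %/ 2) + 4);
                                  (4 * (j %/ 2) + 2, 4 * (j %/ 2) + 3)].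
    by apply/mapP; exists (j %/ 2); rewrite // mem_iota; lia.
  by rewrite !inE; case: b => /=; apply/orP; [right | left]; apply/eqP; congr pair; lia.
- right; apply/flattenP; exists [:: (4 * (j %/ 2 - 1) + 4, 4 * (j %/ 2 - 1) + 5);
                                   (4 * (j %/ 2 - 1) + 3, 4 * (j %/ 2 - 1) + 6)].
    by apply/mapP; exists (j %/ 2 - 1); rewrite // mem_iota; lia.
  by rewrite !inE; case: b => /=; apply/orP; [right | left]; apply/eqP; congr pair; lia.
Qed.

Lemma rail_T_B k j b : j < 2 * k -> rail k j b \in T_B k.
Proof.
move=> lt_j; rewrite mem_edges_of !val_rail_end ?(ltnW lt_j) //.
apply/hasP; exists (ladder_vertex j b, ladder_vertex j.+1 b); first exact: TB_pairs_rail.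
by rewrite /upair !eqxx.
Qed.

Lemma tree_crosses_gap k (T : {set {set vtx k}}) j :
  spanning_tree (E_G k) T -> j < 2 * k -> exists b, rail k j b \in T.
Proof.
case/andP=> TE treeT lt_j.
case/connectP: (tree_connect (a0 k) (rail_end k j.+1 false) treeT) => p p_path p_last.
have out_last : ~~ (level (last (a0 k) p) <= j).
  by rewrite -p_last level_rail_end // -ltnNge.
have [u [v [/andP [_ uv_T] le_u lt_v]]] :=
  path_crossing (P := fun z : vtx k => level z <= j) p_path (leq0n j) out_last.
rewrite /= -ltnNge in le_u lt_v.
have : ladder_adj u v by apply: (@E_G_pairs_ladder k); rewrite -mem_edges_of (subsetP TE).
rewrite /ladder_adj /ladder_step => /orP [] /orP [] /andP [/eqP lvl uv_side]; try lia.
have lu : level u = j by lia.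
have lv : level v = j.+1 by lia.
have v_eq : rail_end k j.+1 (side v) = v by rewrite -lv rail_end_level_side.
have u_eq : rail_end k j (side v) = u.
  case/orP: uv_side => [/eqP u0 | /eqP <-]; last by rewrite -lu rail_end_level_side.
  by apply: val_inj; rewrite /= val_rail_end ?(ltnW lt_j) // -lu u0.
by exists (side v); rewrite /rail u_eq v_eq.
Qed.

Section TreePotential.
Variable k : nat.
Implicit Types (T : {set {set vtx k}}) (g : {set vtx k}).

Definition gap_state T j : bool * bool := (rail k j false \in T, rail k j true \in T).
Definition tree_potential T : nat :=
  potential None [seq gap_state T j | j <- iota 0 (2 * k)] 0.

Lemma rail_state_gap T b j : rail_state b (gap_state T j) = (rail k j b \in T).
Proof. by case: b. Qed.

Lemma tree_potential_T_A : (tree_potential (T_A k)).*2 = (2 * k) * (2 * k).-1.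
Proof.
rewrite /tree_potential -(@potential_alternating (2 * k) 0 None) //; congr (_.*2).
congr potential; apply/eq_in_map => j; rewrite mem_iota /= => lt_j.
by rewrite /gap_state /alternating !rail_T_A //; case: odd.
Qed.

Lemma tree_potential_T_B : tree_potential (T_B k) = 0.
Proof.
rewrite /tree_potential potential_two_sided //.
by apply/allP => s /mapP [j]; rewrite mem_iota /= => lt_j ->; rewrite /gap_state !rail_T_B.
Qed.

Lemma leaf_move_gap_states T T' (x : vtx k) i : i.+1 < 2 * k -> level x = i.+1 ->
  spanning_tree (E_G k) T -> spanning_tree (E_G k) T' ->
  (forall g, x \notin g -> (g \in T) = (g \in T')) ->
  deg_le1 T x -> deg_le1 T' x ->
  leaf_move (side x) (gap_state T i) (gap_state T i.+1) (gap_state T' i) (gap_state T' i.+1).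
Proof.
move=> lt_i lx spT spT' TT' leafT leafT'.
have x_eq : rail_end k i.+1 (side x) = x by rewrite -lx rail_end_level_side.
have x_rail_i : x \in rail k i (side x) by rewrite /rail x_eq set22.
have x_rail_Si : x \in rail k i.+1 (side x) by rewrite /rail x_eq set21.
have other j : j < 2 * k -> (rail k j (~~ side x) \in T) = (rail k j (~~ side x) \in T').
  move=> lt_j; apply: TT'; apply/negP => /(mem_rail lt_j lx) /andP [_].
  by case: side.
have crosses T0 j : spanning_tree (E_G k) T0 -> j < 2 * k ->
    (gap_state T0 j).1 || (gap_state T0 j).2.
  by move=> spT0 /(tree_crosses_gap spT0) [[] T0j]; rewrite /= T0j ?orbT.
have rails_neq : rail k i (side x) != rail k i.+1 (side x).
  apply/negP=> /eqP rails_eq.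
  have : rail_end k i (side x) \in rail k i.+1 (side x) by rewrite -rails_eq set21.
  rewrite !inE => /orP [] /eqP /(congr1 (fun z : vtx k => level z)) /=;
    by rewrite !level_rail_end; lia.
have leaf T0 : deg_le1 T0 x ->
    ~~ ((rail k i (side x) \in T0) && (rail k i.+1 (side x) \in T0)).
  move=> leaf0; apply/negP => /andP [T0i T0Si]; move/eqP: rails_neq; apply.
  exact: leaf0.
have lt_i' : i < 2 * k by apply: ltnW.
by rewrite /leaf_move !rail_state_gap !other ?leaf ?eqxx //= !crosses.
Qed.

Lemma tree_potential_adjacent T T' :
  spanning_tree (E_G k) T -> spanning_tree (E_G k) T' -> adjacent_trees (a0 k) T T' ->
  tree_potential T <= tree_potential T' + 1.
Proof.
move=> spT spT' /(adjacent_trees_leaf (andP spT).2 (andP spT').2) [x xa [TT' leafT leafT']].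
have [i lx] : exists i, level x = i.+1.
  exists (level x).-1; rewrite prednK // lt0n; apply: contraNneq xa => lx0.
  by apply/eqP/ord_inj; move: lx0; rewrite /level /=; lia.
have lt_i : i < 2 * k by rewrite -ltnS -lx ltnS level_vtx_le.
apply: (@potential_leaf_move None _ i (side x)) => // [j lt_j ji jSi | lt_Si].
  rewrite /gap_state !TT' //; apply/negP => /(mem_rail lt_j lx);
  by rewrite (negbTE ji) (negbTE jSi).
exact: leaf_move_gap_states.
Qed.

Lemma tree_potential_chain T s :
  all (spanning_tree (E_G k)) (T :: s) ->
  (forall i, i < size s -> adjacent_trees (a0 k) (nth T (T :: s) i) (nth T s i)) ->
  tree_potential T <= tree_potential (last T s) + size s.
Proof.
elim: s T => [|T1 s IH] T /=; first by rewrite addn0.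
case/and3P=> spT spT1 sp_s adj.
have step := tree_potential_adjacent spT spT1 (adj 0 (ltn0Sn _)).
have chain : tree_potential T1 <= tree_potential (last T1 s) + size s.
  apply: IH => [|i lt_i]; first by rewrite /= spT1.
  have := adj i.+1 lt_i; rewrite /= (set_nth_default T1 T) ?(set_nth_default T1 T lt_i) //.
  by rewrite /= ltnS ltnW.
by rewrite addnS -addn1; apply: leq_trans step _; rewrite leq_add2r.
Qed.
End TreePotential.

Theorem theorem2 :
  exists c : rat, (0 < c)%R /\
  forall (k : nat), 1 <= k ->
  forall (T : {set {set vtx k}}) (s : seq {set {set vtx k}}),
    T = T_A k ->
    last T s = T_B k ->
    all (spanning_tree (E_G k)) (T :: s) ->
    (forall i, i < size s -> adjacent_trees (a0 k) (nth T (T :: s) i) (nth T s i)) ->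
    (c * ((4 * k + 1) ^ 2)%:R <= (size s + 1)%:R)%R.
Proof.
exists (25%:R^-1)%R; split; first by rewrite invr_gt0 ltr0n.
move=> k k_pos T s -> last_s sp_s adj_s.
have := tree_potential_chain sp_s adj_s; rewrite last_s tree_potential_T_B add0n.
have := tree_potential_T_A k; set P := tree_potential _ => P_A P_le.
have bound : (4 * k + 1) ^ 2 <= 25 * (size s + 1) by nia.
have : (((4 * k + 1) ^ 2)%:R <= (25 * (size s + 1))%:R :> rat)%R by rewrite ler_nat.
rewrite natrM; lra.
Qed.
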